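(* Every totally disconnected compact metric space has the $\omega$-FTP property. In particular, the Cantor space has the $\omega$-FTP property.
   Context: For continuous $f:X\to X$ and $x\in X$, $\omega_f(x)=\{y:\ \exists\, n_i\to+\infty,\ f^{n_i}(x)\to y\}$, totally periodic if all its points are periodic for $f$. A compact metric space $X$ has the $\omega$-FTP property if for every continuous $f:X\to X$, every totally periodic $\omega$-limit set of $f$ is finite. *)

From HB Require Import structures.
From mathcomp Require Import all_boot all_order all_algebra.
From mathcomp Require Import all_classical all_reals all_analysis.

Set Implicit Arguments.
Unset Strict Implicit.
Unset Printing Implicit Defensive.

Import Order.TTheory GRing.Theory Num.Theory.
Local Open Scope classical_set_scope.

Definition omega_limit {T : topologicalType} (f : T -> T) (x : T) : set T :=
  [set y | exists n : nat -> nat,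
      (forall N : nat, exists i0 : nat, forall i : nat, (i0 <= i)%N -> (N <= n i)%N)
      /\ ((fun i => iter (n i) f x) @ \oo --> y)].

Definition periodic_point {T : Type} (f : T -> T) (y : T) : Prop :=
  exists p : nat, (0 < p)%N /\ iter p f y = y.

Definition totally_periodic {T : Type} (f : T -> T) (A : set T) : Prop :=
  forall y, A y -> periodic_point f y.

Definition omega_FTP (T : topologicalType) : Prop :=
  forall f : T -> T, continuous f ->
  forall x : T, totally_periodic f (omega_limit f x) -> finite_set (omega_limit f x).

From HB Require Import structures.
From mathcomp Require Import all_boot all_order all_algebra.
From mathcomp Require Import all_classical all_reals all_analysis.
From mathcomp Require Import Rstruct zify.

Import Order.TTheory GRing.Theory Num.Theory.
Local Open Scope classical_set_scope.

(* Let every point of the omega-limit set L of x be periodic, in a compact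
   Hausdorff zero-dimensional space.  Shrinking clopen sets meeting L so as to
   exclude, at stage k, the points of period k would produce a point of L with
   no period; hence f^n = id on U `&` L for some clopen U meeting L and n > 0.
   For y in U `&` L, the clopen neighbourhoods of y inside U are mapped into
   themselves by f^n near L, so they trap the orbit along a residue class mod n
   through which it accumulates at y.  Thus the orbit converges to f^d y along
   the residue classes mod n, and L = {f^d y | d < n}.  Compact Hausdorff
   totally disconnected spaces are zero-dimensional because their
   quasi-components are connected. *)

Section compact_intersection.
Context {T : topologicalType}.
Hypothesis compactT : compact [set: T].

Lemma compact_directed_bigcap (I : Type) (D : I -> set T) :
  inhabited I -> (forall i, closed (D i)) ->
  (forall i j, exists k, D k `<=` D i `&` D j) -> (forall i, D i !=set0) ->
  exists p, forall i, D i p.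
Proof.
move=> [i0] clD dirD D0.
have DF : Filter (filter_from [set: I] D).
  apply: filter_from_filter; first by exists i0.
  by move=> i j _ _; have [k Dk] := dirD i j; exists k.
have DPF : ProperFilter (filter_from [set: I] D).
  by apply: filter_from_proper => i _; exact: D0.
have [p [_ clp]] := compactT _ DPF filterT.
exists p => i; apply: (clD i) => B Bp.
by apply: clp Bp; exists i.
Qed.

Lemma compact_nonincreasing_bigcap (D : nat -> set T) :
  (forall n, closed (D n)) -> (forall n, D n.+1 `<=` D n) ->
  (forall n, D n !=set0) -> exists p, forall n, D n p.
Proof.
move=> clD DS D0; have Dle m n : (m <= n)%N -> D n `<=` D m.
  elim: n => [|n IHn]; first by rewrite leqn0 => /eqP->.
  rewrite leq_eqVlt => /orP[/eqP->//|/IHn]; exact: subset_trans (DS n).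
apply: compact_directed_bigcap => //; first exact: inhabits 0%N.
by move=> m n; exists (maxn m n) => z Dz; split; apply: Dle Dz;
  rewrite ?leq_maxl ?leq_maxr.
Qed.

Lemma compact_cluster_sub_open (F : set_system T) (W : set T) :
  ProperFilter F -> open W -> cluster F `<=` W -> F W.
Proof.
move=> PF oW FW; apply: contrapT => nFW.
pose D (A : {A | F A}) := closure (sval A) `&` ~` W.
have [p Dp] : exists p, forall A, D A p.
  apply: compact_directed_bigcap.
  - exact: inhabits (exist _ setT filterT).
  - by move=> A; apply: closedI; [exact: closed_closure|exact: open_closedC].
  - move=> [A FA] [B FB]; exists (exist _ (A `&` B) (filterI FA FB)).
    by move=> z /= [/closureI[? ?] ?].
  - move=> [A FA]; apply: contrapT => DA0; apply: nFW.
    apply: filterS (FA) => z Az; apply: contrapT => Wz; apply: DA0.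
    by exists z; split => //; exact: subset_closure.
have : cluster F p by rewrite clusterE => A FA; exact: (Dp (exist _ A FA)).1.
by move/FW; exact: (Dp (exist _ setT filterT)).2.
Qed.

End compact_intersection.

Definition quasi_component {T : topologicalType} (x : T) :=
  [set z | forall U, clopen U -> U x -> U z].

Section quasi_component.
Context {T : topologicalType}.
Implicit Type x : T.

Lemma closed_quasi_component x : closed (quasi_component x).
Proof.
rewrite (_ : quasi_component x = \bigcap_(U in [set U | clopen U /\ U x]) U).
  by apply: closed_bigI => U [[]].
by apply/seteqP; split => [z Qz U [] | z Uz U cU Ux]; [exact: Qz | exact: Uz].
Qed.

Hypothesis compactT : compact [set: T].

Lemma quasi_component_open_sub x (W : set T) : open W ->
  quasi_component x `<=` W -> exists C, [/\ clopen C, C x & C `<=` W].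
Proof.
move=> oW QW; apply: contrapT => noC.
pose D (C : {C | clopen C /\ C x}) := sval C `&` ~` W.
have [p Dp] : exists p, forall C, D C p.
  apply: compact_directed_bigcap => //.
  - exact: inhabits (exist _ setT (conj clopenT I)).
  - move=> [C [[oC clC] Cx]]; apply: closedI => //; exact: open_closedC.
  - move=> [C [cC Cx]] [C' [cC' C'x]].
    exists (exist _ (C `&` C') (conj (clopenI cC cC') (conj Cx C'x))).
    by move=> z [[? ?] ?].
  - move=> [C [cC Cx]]; apply: contrapT => DC0; apply: noC; exists C.
    by split => // z Cz; apply: contrapT => Wz; apply: DC0; exists z.
have Qp : quasi_component x p.
  by move=> U cU Ux; exact: (Dp (exist _ U (conj cU Ux))).1.
exact: (Dp (exist _ setT (conj clopenT I))).2 (QW _ Qp).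
Qed.

Hypothesis hausdorffT : hausdorff_space T.

Lemma connected_quasi_component x : connected (quasi_component x).
Proof.
suff noE (E : bool -> set T) : (forall b, E b !=set0) ->
    quasi_component x = E false `|` E true -> separated (E false) (E true) ->
    ~ E false x.
  apply/connectedP => E [E0 QE sepE].
  have [] : (E false `|` E true) x by rewrite -QE.
    exact: noE.
  apply: (noE (E \o negb)) => //=; last by rewrite separatedC.
  by rewrite setUC.
move=> E0 QE sepE Ex; have [clE0 clE1] := sepE.
have closedE (A B : set T) : quasi_component x = A `|` B ->
    closure A `&` B = set0 -> closed A.
  move=> QAB AB0 z Az; have : quasi_component x z.
    apply: closed_quasi_component; apply: closureS Az.
    by rewrite QAB => ? ?; left.
  by rewrite QAB => -[//|Bz]; have : (closure A `&` B) z by []; rewrite AB0.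
have closedE1 : closed (E true).
  by apply: (closedE _ (E false)); [rewrite setUC | rewrite setIC].
(* the realType parameter of normal_openP is irrelevant to its statement *)
have [U [V [oU oV EU EV UV0]]] :=
  (normal_openP (R := Rdefinitions.R)).1 (compact_normal hausdorffT compactT)
  _ _ (closedE _ _ QE clE0) closedE1 (separated_disjoint sepE).
have [C [[oC clC] Cx CUV]] : exists C, [/\ clopen C, C x & C `<=` U `|` V].
  apply: quasi_component_open_sub; first exact: openU.
  by rewrite QE => z [/EU|/EV]; [left|right].
have clopenCU : clopen (C `&` U).
  split; first exact: openI.
  suff -> : C `&` U = C `&` ~` V by apply: closedI => //; exact: open_closedC.
  apply/seteqP; split => z [Cz Uz]; split => //.
    by move=> Vz; have : (U `&` V) z by []; rewrite UV0.
  by case: (CUV z Cz).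
have [y Ey] := E0 true.
have Qy : quasi_component x y by rewrite QE; right.
have [_ Uy] := Qy _ clopenCU (conj Cx (EU _ Ex)).
have UVy : (U `&` V) y by split => //; exact: EV.
by rewrite UV0 in UVy.
Qed.

Lemma totally_disconnected_zero_dimensional :
  totally_disconnected [set: T] -> zero_dimensional T.
Proof.
move=> tdT x y xy; apply: contrapT => noU.
have Qy : quasi_component x y.
  by move=> U cU Ux; apply: contrapT => Uy; apply: noU; exists U.
have Qx : quasi_component x x by [].
have : connected_component [set: T] x y.
  exact: connected_component_max Qx (subsetT _)
    (connected_quasi_component x) _ Qy.
by rewrite tdT // => yx; rewrite yx eqxx in xy.
Qed.

End quasi_component.

Lemma near_infty_residues (P : nat -> Prop) (m : nat) : (0 < m)%N ->
  (forall d : 'I_m, \forall j \near \oo, P (d + j * m)%N) ->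
  \forall k \near \oo, P k.
Proof.
move=> m0 near_res.
have /choice[J PJ] : forall d : 'I_m,
    exists N, forall j, (N <= j)%N -> P (d + j * m)%N.
  by move=> d; have [N _ PN] := near_res d; exists N.
exists ((\max_(d < m) J d) * m)%N => // k /= Jk.
pose d := Ordinal (ltn_pmod k m0).
rewrite (divn_eq k m) addnC; apply: (PJ d).
rewrite leq_divRL //; apply: leq_trans _ Jk.
by rewrite leq_mul2r (leq_bigmax (F := J) d) orbT.
Qed.

Lemma cluster_seqP {T : topologicalType} (u : nat -> T) (y : T) :
  cluster (u @ \oo) y <->
  forall B, nbhs y B -> forall K, exists2 k, (K <= k)%N & B (u k).
Proof.
split=> [uy B yB K | uB A B [K _ AK] yB].
  have uK : (u @ \oo) (u @` [set k | K <= k]%N).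
    by exists K => // k Kk; exists k.
  by have [_ [[k Kk <-] Bk]] := uy _ _ uK yB; exists k.
by have [k /AK Ak Bk] := uB B yB K; exists (u k).
Qed.

Section residue_classes.
Context {T : topologicalType} {u : nat -> T}.

Lemma fmap_infty_shiftn N : (fun k => u (N + k)%N) @ \oo = u @ \oo.
Proof.
apply/seteqP; split => A /= [K _ AK].
  exists (N + K)%N => // k /= NKk; have Nk : (N <= k)%N by lia.
  by rewrite -(subnKC Nk); apply: AK => /=; lia.
by exists K => // k /= Kk; apply: AK => /=; lia.
Qed.

Context {m : nat} (m_gt0 : (0 < m)%N).

Lemma cluster_residue {y : T} : cluster (u @ \oo) y ->
  exists r : 'I_m, cluster ((fun j => u (r + j * m)%N) @ \oo) y.
Proof.
move=> uy; apply: contrapT => /forallNP noresidue.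
have /choice[N yN] : forall r : 'I_m, exists N : set T,
    nbhs y N /\ \forall j \near \oo, ~ N (u (r + j * m)%N).
  move=> r; apply: contrapT => noN; apply: (noresidue r) => A B FA yB.
  apply: contrapT => /nonemptyPn AB0; apply: noN; exists B; split => //.
  have [K _ AK] := FA; exists K => // j /AK Aj Bj.
  by have : (A `&` B) (u (r + j * m)%N) by []; rewrite AB0.
have yNall : nbhs y (fun z => forall r, N r z).
  by apply: filter_forall => r; exact: (yN r).1.
have notN : (u @ \oo) (~` fun z => forall r, N r z).
  apply: near_infty_residues m_gt0 _ => d; apply: filterS (yN d).2 => j Nj Nall.
  exact/Nj/Nall.
by have [z [Nz /Nz]] := uy _ _ notN yNall.
Qed.

Lemma cluster_sub_residue_limits {l : 'I_m -> T} : hausdorff_space T ->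
  (forall d : 'I_m, (fun j => u (d + j * m)%N) @ \oo --> l d) ->
  cluster (u @ \oo) `<=` range l.
Proof.
move=> hT ul z uz; apply: contrapT => zl.
have /choice[AB zAB] : forall d : 'I_m, exists AB : set T * set T,
    [/\ nbhs z AB.1, nbhs (l d) AB.2 & AB.1 `&` AB.2 = set0].
  move=> d; apply: contrapT => noAB; apply: zl; exists d => //.
  apply/esym/hT => A B zA lB.
  by apply: contrapT => /nonemptyPn AB0; apply: noAB; exists (A, B).
have zA : nbhs z (fun w => forall d, (AB d).1 w).
  by apply: filter_forall => d; have [] := zAB d.
have notA : (u @ \oo) (~` fun w => forall d, (AB d).1 w).
  apply: near_infty_residues m_gt0 _ => d; have [_ lB AB0] := zAB d.
  have [K _ BK] := ul d _ lB; exists K => // j /BK Bj Aj.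
  have ABj : ((AB d).1 `&` (AB d).2) (u (d + j * m)%N).
    by split => //; exact: Aj.
  by rewrite AB0 in ABj.
by have [w [Aw /Aw]] := uz _ _ notA zA.
Qed.

End residue_classes.

Section zero_dimensional_compact.
Context {T : topologicalType}.
Hypotheses (hausdorffT : hausdorff_space T) (zdT : zero_dimensional T)
  (compactT : compact [set: T]).

Lemma clopen_nbhs_sub {z : T} {N : set T} : nbhs z N ->
  exists C, [/\ clopen C, C z & C `<=` N].
Proof.
move=> /(zero_dimensional_cvg hausdorffT zdT compactT) [C [Cz cC] CN].
by exists C.
Qed.

Lemma clopen_nbhs_fixpoint_free {g : T -> T} {U : set T} {z : T} :
  continuous g -> clopen U -> U z -> g z <> z ->
  exists C, [/\ clopen C, C `<=` U, C z & forall w, C w -> g w <> w].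
Proof.
move=> g_cont [oU clU] Uz gz_neq.
have [A [B [gzA zB AB0]]] :
    exists A B, [/\ nbhs (g z) A, nbhs z B & A `&` B = set0].
  apply: contrapT => noAB; apply/gz_neq/hausdorffT => A B gzA zB.
  by apply: contrapT => /nonemptyPn AB0; apply: noAB; exists A, B.
have zN : nbhs z (B `&` g @^-1` A `&` U).
  apply: filterI; last exact: open_nbhs_nbhs.
  by apply: filterI => //; exact: g_cont.
have [C [cC Cz CN]] := clopen_nbhs_sub zN.
exists C; split => // [w /CN[] //|w /CN[[Bw Agw] _] gw].
have ABw : (A `&` B) w by split => //; rewrite -gw.
by rewrite AB0 in ABw.
Qed.

End zero_dimensional_compact.

Section omega_limit_set.
Context {T : topologicalType} (f : T -> T) (x : T).
Hypotheses (f_cont : continuous f) (compactT : compact [set: T]).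
Local Notation orbit := (fun k => iter k f x).
Local Notation omega := (cluster (orbit @ \oo)).

Lemma continuous_iter n : continuous (iter n f).
Proof.
elim: n => [|n IHn] z /=; first exact: cvg_id.
exact: (continuous_comp (IHn z) (f_cont _)).
Qed.

Lemma closed_omega : closed omega.
Proof.
by rewrite clusterE; apply: closed_bigI => A _; exact: closed_closure.
Qed.

Lemma omega_trap {V : set T} {n : nat} : clopen V ->
  (forall z, V z -> omega z -> V (iter n f z)) ->
  \forall k \near \oo, V (iter k f x) -> V (iter (k + n) f x).
Proof.
move=> [oV clV] Vn; pose W := (V `&` iter n f @^-1` V) `|` ~` V.
have oW : open W.
  apply: openU; last exact: closed_openC.
  by apply: openI => //; apply: open_comp => // z _; exact: continuous_iter.
(* W contains omega, hence the orbit is eventually in W *)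
have [K _ WK] : (orbit @ \oo) W.
  apply: compact_cluster_sub_open => // z oz.
  by have [Vz|nVz] := pselect (V z); [left; split => //; exact: Vn|right].
by exists K => // k /WK[[_ Vnk]|//] _; rewrite addnC iterD.
Qed.

Hypotheses (hausdorffT : hausdorff_space T) (zdT : zero_dimensional T).

Lemma omega_progression_cvg {U : set T} {n r : nat} {y : T} :
  (0 < n)%N -> clopen U ->
  (forall z, U z -> omega z -> iter n f z = z) -> U y ->
  cluster ((fun j => iter (r + j * n) f x) @ \oo) y ->
  (fun j => iter (r + j * n) f x) @ \oo --> y.
Proof.
move=> n_gt0 [oU clU] Ufix Uy /cluster_seqP y_r N yN.
have yNU : nbhs y (N `&` U) by apply: filterI => //; exact: open_nbhs_nbhs.
have [D [cD Dy DNU]] := clopen_nbhs_sub hausdorffT zdT compactT yNU.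
have Dn z : D z -> omega z -> D (iter n f z).
  by move=> Dz oz; rewrite Ufix //; exact: (DNU z Dz).2.
have [K _ trapK] := omega_trap cD Dn.
have [j0 Kj0 Dj0] := y_r D (open_nbhs_nbhs (conj cD.1 Dy)) K.
have Dj i : D (iter (r + (j0 + i) * n) f x).
  elim: i => [|i IHi]; first by rewrite addn0.
  rewrite addnS mulSn [(n + _)%N]addnC addnA; move: IHi; apply: trapK => /=.
  by apply: leq_trans Kj0 _; nia.
exists j0 => // j /= j0j; rewrite -(subnKC j0j).
exact: (DNU _ (Dj _)).1.
Qed.

Lemma omega_nonempty : omega !=set0.
Proof. by have [y [_ oy]] := compactT (orbit @ \oo) _ filterT; exists y. Qed.

Lemma clopen_omega_periodic : (forall y, omega y -> periodic_point f y) ->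
  exists n U, [/\ (0 < n)%N, clopen U, U `&` omega !=set0 &
    forall z, U z -> omega z -> iter n f z = z].
Proof.
(* Otherwise clopen sets meeting omega can be shrunk so that the k-th one has
   no point of period k; their common point in omega is not periodic. *)
move=> omega_per; apply: contrapT => no_clopen.
pose good U := clopen U /\ U `&` omega !=set0.
have /choice[shrink shrinkP] : forall nU : nat * set T, exists U', good nU.2 ->
    [/\ good U', U' `<=` nU.2 & forall z, U' z -> iter nU.1.+1 f z <> z].
  move=> [n U]; have [[cU UO]|] := pselect (good U); last by exists U.
  have [z [Uz oz fz]] : exists z, [/\ U z, omega z & iter n.+1 f z <> z].
    apply: contrapT => fixU; apply: no_clopen; exists n.+1, U.
    split => // z Uz oz.
    by apply: contrapT => fz; apply: fixU; exists z.
  have [C [cC CU Cz Cfree]] := clopen_nbhs_fixpoint_free hausdorffT zdT compactT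
    (continuous_iter n.+1) cU Uz fz.
  by exists C => _; split => //; split => //; exists z.
pose C := fix C k := if k is k'.+1 then shrink (k', C k') else setT.
have Cgood k : good (C k).
  elim: k => [|k IHk]; last by have [] := shrinkP (k, C k) IHk.
  by split; [exact: clopenT | rewrite setTI; exact: omega_nonempty].
have [p Cp] : exists p, forall k, (C k `&` omega) p.
  apply: (compact_nonincreasing_bigcap compactT) => [k | k | k].
  - by apply: closedI; [exact: (Cgood k).1.2 | exact: closed_omega].
  - by have [_ CS _] := shrinkP (k, C k) (Cgood k); apply: setSI.
  - exact: (Cgood k).2.
have [[|q] [//= _ fqp]] := omega_per p (Cp 0%N).2.
by have [_ _ Cfree] := shrinkP (q, C q) (Cgood q); apply: Cfree (Cp q.+1).1 fqp.
Qed.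

Lemma omega_finite :
  (forall y, omega y -> periodic_point f y) -> finite_set omega.
Proof.
move=> omega_per.
have [n [U [n_gt0 cU [y [Uy oy]] Ufix]]] := clopen_omega_periodic omega_per.
have [r oy_r] := cluster_residue n_gt0 oy.
have cvg_r := omega_progression_cvg n_gt0 cU Ufix Uy oy_r.
have cvg_d (d : 'I_n) :
    (fun j => iter (r + (d + j * n)) f x) @ \oo --> iter d f y.
  under eq_fun do rewrite addnCA iterD.
  exact: (continuous_cvg _ (continuous_iter d y) cvg_r).
rewrite -(fmap_infty_shiftn r).
apply: sub_finite_set (cluster_sub_residue_limits n_gt0 hausdorffT cvg_d) _.
exact: finite_image finite_finset.
Qed.

End omega_limit_set.

Lemma omega_limitE {R : realType} {X : pseudoMetricType R}
    (f : X -> X) (x : X) :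
  omega_limit f x = cluster ((fun k => iter k f x) @ \oo).
Proof.
apply/seteqP; split => y.
  move=> [n [n_oo n_y]]; apply/cluster_seqP => B yB K.
  have [i1 _ Bi1] := n_y _ yB; have [i0 Ki0] := n_oo K.
  exists (n (maxn i0 i1)); first by apply: Ki0; exact: leq_maxl.
  by apply: Bi1; exact: leq_maxr.
move/cluster_seqP => y_orbit.
have /choice[n nP] : forall i, exists k,
    (i <= k)%N /\ ball y (i.+1%:R^-1)%R (iter k f x).
  move=> i; have i_gt0 : (0 < i.+1%:R^-1 :> R)%R by rewrite invr_gt0 ltr0n.
  by have [k ik yk] := y_orbit _ (nbhsx_ballx y _ i_gt0) i; exists k.
exists n; split.
  by move=> N; exists N => i Ni; exact: leq_trans Ni (nP i).1.
move=> B /nbhs_ballP[e /= e_gt0 yeB].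
have [i0 _ i0e] := near_infty_natSinv_lt (PosNum e_gt0).
exists i0 => // i /= i0i; apply/yeB/(le_ball _ (nP i).2)/ltW.
exact: i0e.
Qed.

Lemma zero_dimensional_omega_FTP {R : realType} {X : pseudoMetricType R} :
  hausdorff_space X -> compact [set: X] -> zero_dimensional X -> omega_FTP X.
Proof.
by move=> hX cX zX f f_cont x; rewrite omega_limitE; exact: omega_finite.
Qed.

Theorem corollary2p6 :
  (forall (R : realType) (X : pseudoMetricType R),
      hausdorff_space X -> compact [set: X] -> totally_disconnected [set: X] ->
      omega_FTP X)
  /\ omega_FTP cantor_space.
Proof.
split=> [R X hX cX tdX|].
  apply: zero_dimensional_omega_FTP => //.
  exact: totally_disconnected_zero_dimensional.
exact: (@zero_dimensional_omega_FTP Rdefinitions.R _ cantor_space_hausdorff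
  cantor_space_compact cantor_zero_dimensional).
Qed.
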